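(* Under the hypotheses of the following setting: $C_{ti},L^C_{ti},R^C_{ti},\eta_i>0$, $k^C_{1,i},k^C_{2,i},k^C_{3,i}\in\mathbb{R}$, $F_i^C$ as below, $P_i^C$ a real symmetric $3\times3$ matrix of the form $\begin{bmatrix}\eta_i&0&0\\0&p^C_{22,i}&p^C_{23,i}\\0&p^C_{23,i}&p^C_{33,i}\end{bmatrix}$ with $P_i^C>0$, and $Q_i^C=(F_i^C)^TP_i^C+P_i^CF_i^C$ satisfying $Q_i^C\le0$ and $Q_i^C\ne0$. Then for $w\in\mathbb{R}^3$ one has $w^TQ_i^Cw=0$ if and only if $w=(\alpha,0,\beta)^T$ for some $\alpha,\beta\in\mathbb{R}$.
   Context: $F_i^C=\begin{bmatrix}0&\frac{1}{C_{ti}}&0\\ \frac{k^C_{1,i}-1}{L^C_{ti}}&\frac{k^C_{2,i}-R^C_{ti}}{L^C_{ti}}&\frac{k^C_{3,i}}{L^C_{ti}}\\ 0&-1&0\end{bmatrix}$. Inequalities between symmetric matrices are in the semidefinite (Loewner) sense. *)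

From HB Require Import structures.
From mathcomp Require Import all_boot all_order all_algebra.
Set Implicit Arguments. Unset Strict Implicit. Unset Printing Implicit Defensive.
Import Order.TTheory GRing.Theory Num.Theory.
Local Open Scope ring_scope.

Definition qform (R : numDomainType) (A : 'M[R]_3) (w : 'cV[R]_3) : R :=
  ((w^T *m A *m w) 0 0).

Definition posdef (R : numDomainType) (A : 'M[R]_3) : Prop :=
  forall w : 'cV[R]_3, w != 0 -> 0 < qform A w.
Definition negsemidef (R : numDomainType) (A : 'M[R]_3) : Prop :=
  forall w : 'cV[R]_3, qform A w <= 0.

Definition FC (R : fieldType) (C L Rr k1 k2 k3 : R) : 'M[R]_3 :=
  \matrix_(i < 3, j < 3)
    match nat_of_ord i, nat_of_ord j with
    | 0, 1 => 1 / C
    | 1, 0 => (k1 - 1) / L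
    | 1, 1 => (k2 - Rr) / L
    | 1, 2 => k3 / L
    | 2, 1 => -1
    | _, _ => 0
    end.

Definition PC (R : ringType) (eta p22 p23 p33 : R) : 'M[R]_3 :=
  \matrix_(i < 3, j < 3)
    match nat_of_ord i, nat_of_ord j with
    | 0, 0 => eta
    | 1, 1 => p22
    | 1, 2 => p23
    | 2, 1 => p23
    | 2, 2 => p33
    | _, _ => 0
    end.

Definition vec3 (R : ringType) (a b c : R) : 'cV[R]_3 :=
  \col_(i < 3) match nat_of_ord i with 0 => a | 1 => b | _ => c end.

(* Only the y-coordinate of w enters the quadratic form of Q in a "diagonal"
   way: the x-coordinate has no square term, so negative semidefiniteness
   kills every cross term with x (in particular eta/C + p22 (k1-1)/L and
   p23 (k1-1)/L), and eta/C > 0 then forces p23 = 0; the z-square term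
   vanishes with p23, which kills the yz cross term in turn. Hence
   w^T Q w = 2 a y^2, and a <> 0 because otherwise Q = 0. *)
From HB Require Import structures.
From mathcomp Require Import all_boot all_order all_algebra ring lra.
Set Implicit Arguments. Unset Strict Implicit. Unset Printing Implicit Defensive.
Import Order.TTheory GRing.Theory Num.Theory.
Local Open Scope ring_scope.

Lemma quad_cross_coef_eq0 (R : numFieldType) (a c : R) :
  (forall u v, a * u ^+ 2 + c * u * v <= 0) -> c = 0.
Proof.
move=> hq; apply/eqP/negPn/negP => c_neq0.
have := hq 1 ((1 - a) / c).
have -> : a * 1 ^+ 2 + c * 1 * ((1 - a) / c) = 1 by field.
by rewrite ler10.
Qed.

Lemma col3_vec3 (R : nzRingType) (w : 'cV[R]_3) :
  w = vec3 (w 0 0) (w 1 0) (w 2 0).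
Proof.
apply/matrixP => i j; rewrite !mxE (ord1 j).
by case: i => [[|[|[|]]] ?] //=; congr (w _ _); apply/val_inj.
Qed.

Section QuadraticFormQC.

Variables (R : realFieldType) (C L Rr eta k1 k2 k3 p22 p23 p33 : R).

Definition QC : 'M[R]_3 :=
  (FC C L Rr k1 k2 k3)^T *m PC eta p22 p23 p33
  + PC eta p22 p23 p33 *m FC C L Rr k1 k2 k3.

Let a := p22 * ((k2 - Rr) / L) - p23.
Let b := p23 * (k3 / L).
Let d := eta / C + p22 * ((k1 - 1) / L).
Let e := p23 * ((k1 - 1) / L).
Let g := p22 * (k3 / L) + p23 * ((k2 - Rr) / L) - p33.

Let q (x y z : R) := a * y ^+ 2 + b * z ^+ 2 + d * x * y + e * x * z + g * y * z.

Lemma qform_QC_vec3 x y z : qform QC (vec3 x y z) = 2 * q x y z.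
Proof.
rewrite /qform /QC; do 3 rewrite !mxE !big_ord_recl !big_ord0.
by rewrite /FC /PC /vec3 !mxE /q /a /b /d /e /g /=; ring.
Qed.

Lemma QC_eq0 : p23 = 0 -> d = 0 -> g = 0 -> a = 0 -> QC = 0.
Proof.
rewrite /d /g /a => p23_0; rewrite p23_0 => hd hg ha.
apply/matrixP => i j; rewrite /QC /FC /PC p23_0 !mxE !(big_ord_recl, big_ord0, mxE) /=.
by case: i => [[|[|[|]]] ?] //=; case: j => [[|[|[|]]] ?] //=; rewrite ?mxE /=; lra.
Qed.

Hypotheses (hC : 0 < C) (heta : 0 < eta) (hQ : negsemidef QC).

Let q_le0 x y z : q x y z <= 0.
Proof. by have := hQ (vec3 x y z); rewrite qform_QC_vec3 pmulr_rle0. Qed.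

Lemma QC_coefs_eq0 : [/\ d = 0, p23 = 0, b = 0, e = 0 & g = 0].
Proof.
have hd : d = 0.
  by apply: (@quad_cross_coef_eq0 R a) => u v; have := q_le0 v u 0; rewrite /q; lra.
have he : e = 0.
  by apply: (@quad_cross_coef_eq0 R b) => u v; have := q_le0 v 0 u; rewrite /q; lra.
have k1L_neq0 : (k1 - 1) / L != 0.
  apply/eqP => k1L_0; move: hd; rewrite /d k1L_0 mulr0 addr0.
  by move/eqP; rewrite gt_eqF // divr_gt0.
have hp23 : p23 = 0.
  by apply/eqP; move/eqP: he; rewrite /e mulf_eq0 (negbTE k1L_neq0) orbF.
have hb : b = 0 by rewrite /b hp23 mul0r.
split=> //; apply: (@quad_cross_coef_eq0 R a) => u v.
by have := q_le0 0 u v; rewrite /q hb; lra.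
Qed.

Lemma qform_QC_vec3_y x y z : qform QC (vec3 x y z) = 2 * a * y ^+ 2.
Proof.
by case: QC_coefs_eq0 => hd _ hb he hg; rewrite qform_QC_vec3 /q hb hd he hg; ring.
Qed.

Hypothesis (hQ0 : QC != 0).

Lemma QC_coef_y2_neq0 : a != 0.
Proof.
apply/eqP => ha; move/eqP: hQ0; apply.
by case: QC_coefs_eq0 => hd hp23 _ _ hg; apply: QC_eq0.
Qed.

End QuadraticFormQC.

Theorem lemma1 (R : realFieldType)
  (C L Rr eta k1 k2 k3 p22 p23 p33 : R)
  (hC : 0 < C) (hL : 0 < L) (hR : 0 < Rr) (heta : 0 < eta)
  (hP : posdef (PC eta p22 p23 p33))
  (hQ : negsemidef ((FC C L Rr k1 k2 k3)^T *m PC eta p22 p23 p33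
                     + PC eta p22 p23 p33 *m FC C L Rr k1 k2 k3))
  (hQ0 : (FC C L Rr k1 k2 k3)^T *m PC eta p22 p23 p33
           + PC eta p22 p23 p33 *m FC C L Rr k1 k2 k3 != 0)
  (w : 'cV[R]_3) :
  qform ((FC C L Rr k1 k2 k3)^T *m PC eta p22 p23 p33
          + PC eta p22 p23 p33 *m FC C L Rr k1 k2 k3) w = 0
  <-> exists a b : R, w = vec3 a 0 b.
Proof.
have a_neq0 := QC_coef_y2_neq0 hC heta hQ hQ0.
have qformE := qform_QC_vec3_y hC heta hQ.
rewrite -/(QC _ _ _ _ _ _ _ _ _ _); split.
- rewrite [w]col3_vec3 qformE => /eqP.
  rewrite mulf_eq0 mulf_eq0 pnatr_eq0 (negbTE a_neq0) /= expf_eq0 /= => /eqP w1_0.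
  by exists (w 0 0), (w 2 0); rewrite w1_0.
- by case=> x [z ->]; rewrite qformE expr0n /= mulr0.
Qed.
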